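(* There exists a binary $[40,8]$ linear code $N$ that is doubly even, contains the all-ones vector, and whose dual has minimum weight at least $4$, such that no Type~II $\mathbb{Z}_4$-code $C$ of length $40$ with $C^{(1)}=N$ is extremal.
   Context: A $\mathbb{Z}_4$-code of length $n$ is a $\mathbb{Z}_4$-submodule of $\mathbb{Z}_4^n$; it is self-dual if it equals its dual with respect to $x\cdot y=\sum x_iy_i \pmod 4$. The Euclidean weight of $x$ is $n_1(x)+4n_2(x)+n_3(x)$, $n_\alpha(x)$ being the number of coordinates equal to $\alpha$. A Type~II $\mathbb{Z}_4$-code is a self-dual code all of whose codewords have Euclidean weight divisible by $8$; it is extremal if its minimum Euclidean weight equals $8\lfloor n/24\rfloor+8$ (so $16$ for $n=40$). The residue code is $C^{(1)}=\{c\bmod 2: c\in C\}$. A binary code is doubly even if all codeword weights are divisible by $4$. *)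

From HB Require Import structures.
From mathcomp Require Import all_boot all_order all_algebra.
Set Implicit Arguments. Unset Strict Implicit. Unset Printing Implicit Defensive.
Import GRing.Theory.
Local Open Scope ring_scope.

Definition hwt n (v : 'rV['F_2]_n) : nat := #|[set i : 'I_n | v 0 i != 0]|.

Definition dot2 n (u v : 'rV['F_2]_n) : 'F_2 := \sum_(i < n) u 0 i * v 0 i.

Definition in_dual2 n (N : {vspace 'rV['F_2]_n}) (v : 'rV['F_2]_n) : Prop :=
  forall u, u \in N -> dot2 u v = 0.

Definition doubly_even n (N : {vspace 'rV['F_2]_n}) : Prop :=
  forall v, v \in N -> (4 %| hwt v)%N.

Definition all_ones n : 'rV['F_2]_n := const_mx 1.

Definition dual_min_wt_ge n (N : {vspace 'rV['F_2]_n}) (d : nat) : Prop :=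
  forall v, in_dual2 N v -> v != 0 -> (d <= hwt v)%N.

(* a Z4-code: a Z4-submodule (= additive subgroup) of Z4^n *)
Definition Z4code n (C : {set 'rV['Z_4]_n}) : Prop :=
  0 \in C /\ (forall x y, x \in C -> y \in C -> x - y \in C).

Definition dot4 n (x y : 'rV['Z_4]_n) : 'Z_4 := \sum_(i < n) x 0 i * y 0 i.

Definition dual4 n (C : {set 'rV['Z_4]_n}) : {set 'rV['Z_4]_n} :=
  [set y | [forall x in C, dot4 x y == 0]].

Definition self_dual4 n (C : {set 'rV['Z_4]_n}) : Prop := C = dual4 C.

Definition ncoord n (x : 'rV['Z_4]_n) (alpha : nat) : nat :=
  #|[set i : 'I_n | nat_of_ord (x 0 i) == alpha]|.

Definition ewt n (x : 'rV['Z_4]_n) : nat :=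
  (ncoord x 1 + 4 * ncoord x 2 + ncoord x 3)%N.

Definition typeII n (C : {set 'rV['Z_4]_n}) : Prop :=
  Z4code C /\ self_dual4 C /\ (forall x, x \in C -> (8 %| ewt x)%N).

Definition min_ewt_eq n (C : {set 'rV['Z_4]_n}) (d : nat) : Prop :=
  (exists2 x, x \in C & x != 0 /\ ewt x = d) /\
  (forall x, x \in C -> x != 0 -> (d <= ewt x)%N).

Definition extremal n (C : {set 'rV['Z_4]_n}) : Prop :=
  min_ewt_eq C (8 * (n %/ 24) + 8)%N.

(* reduction mod 2 and residue code C^(1) = { c mod 2 : c in C } *)
Definition red2 n (c : 'rV['Z_4]_n) : 'rV['F_2]_n :=
  \row_i ((nat_of_ord (c 0 i))%:R : 'F_2).

Definition residue_is n (C : {set 'rV['Z_4]_n}) (N : {vspace 'rV['F_2]_n}) : Prop :=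
  forall v : 'rV['F_2]_n, v \in N <-> exists2 c, c \in C & red2 c = v.

From HB Require Import structures.
From mathcomp Require Import all_boot all_order all_algebra.
Set Implicit Arguments. Unset Strict Implicit. Unset Printing Implicit Defensive.
Import GRing.Theory.
Local Open Scope ring_scope.

(* [N40] is spanned by eight rows whose forty columns are distinct bytes;
   it contains the all-ones word, so dual words have even weight, and distinct columns
   exclude dual words of weight 2.  It also contains the indicator [ind4] of the first
   four coordinates.  If [C] is a Type II lift of [N40], pick [c] in [C] reducing to
   [ind4]; adding [2 x] with [x] orthogonal to [N40] stays in [C].  Columns [1..3] are
   the unit vectors of rows [0..2] and every pattern in rows [3..7] is a sum of at most
   two columns, so [x] can cancel all entries [2] of [c] but two.  The result has
   Euclidean weight at most [4 + 4 * 2 = 12 < 16]. *)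

Lemma F2_cases (a : 'F_2) : a = 0 \/ a = 1.
Proof. by case: a => [[|[|//]] ?]; [left|right]; apply/val_inj. Qed.

Lemma F2_addxx (a : 'F_2) : a + a = 0.
Proof. exact/addrr_pchar2/pchar_Fp. Qed.

Lemma F2_natr n : (n%:R : 'F_2) = (odd n)%:R.
Proof. by rewrite -modn2 Fp_nat_mod. Qed.

Lemma F2_neq0E (a : 'F_2) : a = (a != 0)%:R.
Proof. by case: (F2_cases a) => ->. Qed.

Lemma F2_boolr_inj : injective (fun b : bool => (b%:R : 'F_2)).
Proof. by case; case. Qed.

Definition brow n (f : nat -> bool) : 'rV['F_2]_n := \row_(k < n) (f k)%:R.

Definition hwt_meet n (u w : 'rV['F_2]_n) : nat :=
  #|[set k : 'I_n | (u 0 k != 0) && (w 0 k != 0)]|.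

Section BinaryCodes.

Variable n : nat.
Implicit Types (u v w : 'rV['F_2]_n) (f g : nat -> bool).

Lemma hwtE v : hwt v = (\sum_(k < n) (v ord0 k != 0%R : nat))%N.
Proof. by rewrite /hwt -sum1_card big_mkcond; apply: eq_bigr => k _; rewrite inE. Qed.

Lemma hwt0 : hwt (0 : 'rV['F_2]_n) = 0%N.
Proof. by rewrite hwtE big1 // => k _; rewrite mxE. Qed.

Lemma sum_ord_count f : (\sum_(k < n) (f k : nat))%N = count f (iota 0 n).
Proof.
rewrite -(big_mkord xpredT (fun k => (f k : nat))) /index_iota subn0 -sum1_count.
by rewrite [RHS]big_mkcond; apply: eq_bigr => k _; case: (f k).
Qed.

Lemma hwt_brow f : hwt (brow n f) = count f (iota 0 n).
Proof. by rewrite hwtE -sum_ord_count; apply: eq_bigr => k _; rewrite mxE; case: (f k). Qed.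

Lemma browD f g : brow n f + brow n g = brow n (fun k => f k (+) g k).
Proof.
apply/matrixP => i j; rewrite !mxE.
by case: (f j); case: (g j); rewrite ?F2_addxx ?addr0 ?add0r.
Qed.

Lemma eq_brow f g : all (fun k => f k == g k) (iota 0 n) -> brow n f = brow n g.
Proof.
move/allP=> fg; apply/matrixP => i j; rewrite !mxE.
by rewrite (eqP (fg j _)) // mem_iota add0n ltn_ord.
Qed.

Lemma dot2C u v : dot2 u v = dot2 v u.
Proof. by apply: eq_bigr => k _; rewrite mulrC. Qed.

Lemma dot2Dr u v w : dot2 u (v + w) = dot2 u v + dot2 u w.
Proof. by rewrite /dot2 -big_split; apply: eq_bigr => k _; rewrite mxE mulrDr. Qed.

Lemma dot2Zr a u v : dot2 u (a *: v) = a * dot2 u v.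
Proof. by rewrite /dot2 mulr_sumr; apply: eq_bigr => k _; rewrite mxE mulrCA. Qed.

Lemma dot2_sumr m u (F : 'I_m -> 'rV['F_2]_n) :
  dot2 u (\sum_(i < m) F i) = \sum_(i < m) dot2 u (F i).
Proof. by rewrite /dot2 exchange_big; apply: eq_bigr => k _; rewrite summxE mulr_sumr. Qed.

Lemma dot2_delta u k : dot2 u (delta_mx 0 k) = u 0 k.
Proof.
rewrite /dot2 (bigD1 k) //= big1 ?addr0 => [|j /negbTE jk]; first by rewrite mxE !eqxx mulr1.
by rewrite mxE jk andbF mulr0.
Qed.

Lemma dot2_ones v : dot2 (all_ones n) v = (hwt v)%:R.
Proof.
rewrite hwtE natr_sum; apply: eq_bigr => k _.
by rewrite mxE mul1r -F2_neq0E.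
Qed.

Lemma dot2_brow f g :
  dot2 (brow n f) (brow n g) = (count (fun k => f k && g k) (iota 0 n))%:R.
Proof.
rewrite /dot2 -sum_ord_count natr_sum.
by apply: eq_bigr => k _; rewrite !mxE; case: (f k); case: (g k); rewrite ?mulr1 ?mulr0.
Qed.

Lemma hwt_meetE u w :
  hwt_meet u w = (\sum_(k < n) ((u ord0 k != 0%R) && (w ord0 k != 0%R) : nat))%N.
Proof. by rewrite /hwt_meet -sum1_card big_mkcond; apply: eq_bigr => k _; rewrite inE. Qed.

Lemma dot2E_hwt_meet u w : dot2 u w = (hwt_meet u w)%:R.
Proof.
rewrite hwt_meetE natr_sum; apply: eq_bigr => k _.
by case: (F2_cases (u 0 k)) => ->; case: (F2_cases (w 0 k)) => ->;
  rewrite ?mulr0 ?mul0r ?mulr1 ?eqxx ?oner_eq0.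
Qed.

Lemma hwtD u w : (hwt (u + w) + 2 * hwt_meet u w = hwt u + hwt w)%N.
Proof.
rewrite !hwtE hwt_meetE big_distrr -!big_split /=; apply: eq_bigr => k _; rewrite mxE.
by case: (F2_cases (u 0 k)) => ->; case: (F2_cases (w 0 k)) => ->;
  rewrite ?addr0 ?add0r ?F2_addxx ?eqxx ?oner_eq0.
Qed.

Lemma dvd4_hwtD u w :
  dot2 u w = 0 -> (4 %| hwt u)%N -> (4 %| hwt w)%N -> (4 %| hwt (u + w))%N.
Proof.
rewrite dot2E_hwt_meet F2_natr => /(@F2_boolr_inj _ false) even_meet dvd_u dvd_w.
have := hwtD u w; rewrite -(odd_double_half (hwt_meet u w)) even_meet add0n => hwt_uw.
have : (4 %| hwt (u + w) + 2 * (hwt_meet u w)./2.*2)%N by rewrite hwt_uw dvdn_add.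
by rewrite -mul2n mulnA dvdn_addl // dvdn_mulr.
Qed.

Lemma in_dual2_span m (X : m.-tuple 'rV['F_2]_n) x :
  {in X, forall u, dot2 u x = 0} -> in_dual2 <<X>> x.
Proof.
move=> X_x u /coord_span ->; rewrite dot2C dot2_sumr big1 // => i _.
by rewrite dot2Zr dot2C X_x ?mulr0 // mem_nth // size_tuple.
Qed.

Lemma doubly_even_span m (X : m.-tuple 'rV['F_2]_n) :
  {in X &, forall u w, dot2 u w = 0} -> {in X, forall u, 4 %| hwt u}%N ->
  doubly_even <<X>>.
Proof.
move=> X_orth X_dvd4 v /coord_span ->.
pose P w := (w \in <<X>>%VS) && (4 %| hwt w)%N.
have orth_span w w' : w \in <<X>>%VS -> w' \in <<X>>%VS -> dot2 w w' = 0.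
  move=> Xw Xw'; apply: (in_dual2_span _ Xw) => u Xu.
  by rewrite dot2C; apply: (in_dual2_span _ Xw') => u' Xu'; apply: X_orth.
suff /andP[] : P (\sum_i coord X i v *: X`_i) by [].
apply: (big_ind P); first by rewrite /P mem0v hwt0.
  move=> w w' /andP[Xw dw] /andP[Xw' dw']; rewrite /P memvD //=.
  exact: dvd4_hwtD (orth_span _ _ Xw Xw') dw dw'.
move=> i _; have Xi : X`_i \in X by rewrite mem_nth ?size_tuple.
case: (F2_cases (coord X i v)) => ->; first by rewrite scale0r /P mem0v hwt0.
by rewrite scale1r /P memv_span // X_dvd4.
Qed.

Lemma hwt_eq2 v : hwt v = 2%N -> exists a b, a != b /\ v = delta_mx 0 a + delta_mx 0 b.
Proof.
move/eqP/cards2P => [a [b [ab supp_v]]]; exists a, b; split=> //.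
apply/matrixP => i j; rewrite ord1 !mxE /= (F2_neq0E (v 0 j)).
have -> : (v 0 j != 0) = (j == a) || (j == b).
  by have := congr1 (fun A : {set 'I_n} => j \in A) supp_v; rewrite !inE.
case: eqP => [->|_]; first by rewrite (negbTE ab) addr0.
by case: (j == b); rewrite add0r.
Qed.

Lemma dual_min_wt_ge4 (N : {vspace 'rV['F_2]_n}) :
  all_ones n \in N ->
  (forall a b : 'I_n, a != b -> exists2 u, u \in N & u 0 a != u 0 b) ->
  dual_min_wt_ge N 4.
Proof.
move=> N1 N_sep v N'v v_neq0.
have hwt_even : ~~ odd (hwt v).
  by apply/negP => odd_v; move: (N'v _ N1); rewrite dot2_ones F2_natr odd_v.
have hwt_neq0 : hwt v != 0%N.
  apply: contra v_neq0 => /eqP/cards0_eq supp_v; apply/eqP/matrixP => i j.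
  rewrite ord1 mxE; apply/eqP; apply: contraFT (in_set0 j) => vj.
  by rewrite -supp_v inE.
case hwt_v : (hwt v) hwt_even hwt_neq0 => [|[|[|[|m]]]] //= _ _.
have [a [b [ab v_ab]]] := hwt_eq2 hwt_v; have [u Nu u_ab] := N_sep a b ab.
move: (N'v u Nu); rewrite v_ab dot2Dr !dot2_delta -(F2_addxx (u 0 b)) => /addIr uab.
by rewrite uab eqxx in u_ab.
Qed.

End BinaryCodes.

Lemma free_triangular (F : fieldType) m n (v : 'I_m -> 'rV[F]_n) (k : 'I_m -> 'I_n) :
  (forall i, v i 0 (k i) != 0) -> (forall i j : 'I_m, (i < j)%N -> v j 0 (k i) = 0) ->
  free [tuple v i | i < m].
Proof.
move=> pivot_neq0 pivot_below; apply/freeP => a sum_eq0 i.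
have [r] := ubnP i; elim: r i => // r IHr i /ltnSE le_ir.
have := congr1 (fun w : 'rV_n => w 0 (k i)) sum_eq0.
rewrite summxE mxE (bigD1 i) //= big1 ?addr0 => [|j ji].
  by move/eqP; rewrite nth_mktuple mxE mulf_eq0 (negbTE (pivot_neq0 i)) orbF => /eqP.
rewrite nth_mktuple mxE; case: (ltngtP j i) => [lt_ji|lt_ij|/val_inj eq_ji].
- by rewrite IHr ?mul0r // (leq_trans lt_ji).
- by rewrite pivot_below ?mulr0.
- by rewrite eq_ji eqxx in ji.
Qed.

Lemma Z4_cases (a : 'Z_4) : [\/ a = 0, a = 1, a = 2%:R | a = 3%:R].
Proof.
case: a => [[|[|[|[|//]]]] ?]; [constructor 1|constructor 2|constructor 3|constructor 4];
  exact/val_inj.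
Qed.

(* [dbl_mx x] is the vector [2 x'] for any lift [x'] of [x] to [Z_4]. *)
Definition dbl (e : 'F_2) : 'Z_4 := if e == 0 then 0 else 2%:R.

Definition dbl_mx n (x : 'rV['F_2]_n) : 'rV['Z_4]_n := \row_k dbl (x 0 k).

Lemma dbl0 : dbl 0 = 0.
Proof. by rewrite /dbl eqxx. Qed.

Lemma dblD e e' : dbl (e + e') = dbl e + dbl e'.
Proof. by case: (F2_cases e) => ->; case: (F2_cases e') => ->; apply/val_inj. Qed.

Lemma dbl_val e : nat_of_ord (dbl e) = (e != 0).*2.
Proof. by case: (F2_cases e) => ->. Qed.

Lemma mulr_dbl (a : 'Z_4) e : a * dbl e = dbl ((nat_of_ord a)%:R * e).
Proof.
case: (F2_cases e) => ->; first by rewrite !mulr0 ?dbl0.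
by rewrite mulr1 F2_natr; case: (Z4_cases a) => ->; apply/val_inj.
Qed.

Lemma even_addr_dbl (a : 'Z_4) e :
  ~~ odd a -> a + dbl ((nat_of_ord a == 2)%:R + e) = dbl e.
Proof.
by case: (Z4_cases a) => -> // _; case: (F2_cases e) => ->; apply/val_inj.
Qed.

Section Z4Codes.

Variable n : nat.
Implicit Types (c y : 'rV['Z_4]_n) (x : 'rV['F_2]_n).

Lemma red2E c k : red2 c 0 k = (odd (c 0 k))%:R.
Proof. by rewrite mxE F2_natr. Qed.

Lemma red2_0 : red2 (0 : 'rV['Z_4]_n) = 0.
Proof. by apply/matrixP => i k; rewrite ord1 red2E !mxE. Qed.

Lemma red2_addr_dbl c x : red2 (c + dbl_mx x) = red2 c.
Proof.
apply/matrixP => i k; rewrite ord1 !red2E !mxE.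
by case: (Z4_cases (c 0 k)) => ->; case: (F2_cases (x 0 k)) => ->.
Qed.

Lemma dot4_dbl_mx y x : dot4 y (dbl_mx x) = dbl (dot2 (red2 y) x).
Proof.
rewrite /dot4 /dot2 (big_morph dbl dblD dbl0); apply: eq_bigr => k _.
by rewrite !mxE mulr_dbl.
Qed.

Lemma dbl_mx_mem (C : {set 'rV['Z_4]_n}) (N : {vspace 'rV['F_2]_n}) x :
  self_dual4 C -> residue_is C N -> in_dual2 N x -> dbl_mx x \in C.
Proof.
move=> C_sd C_N N'x; rewrite C_sd inE; apply/forall_inP => y Cy.
have Ny : red2 y \in N by apply/(C_N _).2; exists y.
by rewrite dot4_dbl_mx N'x // dbl0.
Qed.

Lemma Z4code_add (C : {set 'rV['Z_4]_n}) c c' :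
  Z4code C -> c \in C -> c' \in C -> c + c' \in C.
Proof.
move=> [C0 C_sub] Cc Cc'; rewrite -[c']opprK -[- c']sub0r.
exact/C_sub/C_sub.
Qed.

Lemma ncoordE c a : ncoord c a = (\sum_(k < n) (nat_of_ord (c ord0 k) == a : nat))%N.
Proof. by rewrite /ncoord -sum1_card big_mkcond; apply: eq_bigr => k _; rewrite inE. Qed.

Lemma ewt_red2 c : ewt c = (hwt (red2 c) + 4 * ncoord c 2)%N.
Proof.
rewrite /ewt addnAC !ncoordE hwtE big_distrr -!big_split /=.
apply: eq_bigr => k _; rewrite red2E.
by case: (Z4_cases (c 0 k)) => ->.
Qed.

(* The last hypothesis says that outside [supp v] every vector is within distance
   two of the dual of [N]; it lets us cancel the entries [2] of a lift of [v] in [C]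
   except at two places. *)
Lemma typeII_light_word (C : {set 'rV['Z_4]_n}) (N : {vspace 'rV['F_2]_n}) v :
  typeII C -> residue_is C N -> v \in N -> v != 0 ->
  (forall t : 'rV['F_2]_n, exists x (p q : 'I_n), in_dual2 N x /\
     forall k, v 0 k = 0 -> x 0 k = t 0 k + (delta_mx 0 p + delta_mx 0 q : 'rV_n) 0 k) ->
  exists2 c, c \in C & c != 0 /\ (ewt c <= hwt v + 8)%N.
Proof.
move=> [C_Z4 [C_sd _]] C_N Nv v_neq0 cover.
have [c Cc red_c] := (C_N v).1 Nv.
have [x [p [q [N'x x_eq]]]] := cover (\row_k (nat_of_ord (c 0 k) == 2)%:R).
have red_c' : red2 (c + dbl_mx x) = v by rewrite red2_addr_dbl.
exists (c + dbl_mx x); first exact: Z4code_add Cc (dbl_mx_mem C_sd C_N N'x).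
split; first by apply: contraNneq v_neq0 => c'0; rewrite -red_c' c'0 red2_0.
rewrite ewt_red2 red_c' leq_add2l (_ : 8 = 4 * 2)%N // leq_mul2l /=.
apply: leq_trans (_ : #|[set p; q]| <= 2)%N; last by rewrite cards2; case: (p != q).
apply: subset_leq_card; apply/subsetP => k; rewrite !inE => /eqP c'k.
have vk : v 0 k = 0 by rewrite -red_c' red2E c'k.
have even_ck : ~~ odd (c 0 k) by apply/negP => odd_ck; move: vk; rewrite -red_c red2E odd_ck.
move: c'k; rewrite !mxE x_eq // !mxE even_addr_dbl // dbl_val.
by case: (k == p); case: (k == q); rewrite ?addr0 ?F2_addxx ?eqxx.
Qed.

End Z4Codes.

Lemma all_iotaP (P : pred nat) m : all P (iota 0 m) -> forall i, (i < m)%N -> P i.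
Proof. by move/allP => P_iota i lt_im; apply: P_iota; rewrite mem_iota. Qed.

(* Column [k] of a generator matrix of [N40], as the byte whose binary digit [i]
   is the entry in row [i]. *)
Definition cols : seq nat :=
  [:: 7; 1; 2; 4; 13; 14; 8; 30; 27; 29; 46; 59; 77; 88; 93; 94; 107; 126; 125; 120;
      139; 142; 141; 155; 157; 158; 173; 174; 168; 184; 190; 187; 206; 216; 222; 221;
      235; 237; 232; 253].

Definition gbit (i k : nat) : bool := odd (nth 0 cols k %/ 2 ^ i).

Definition gen (i : nat) : 'rV['F_2]_40 := brow 40 (gbit i).

Definition gens : 8.-tuple 'rV['F_2]_40 := [tuple gen i | i < 8].

Definition N40 : {vspace 'rV['F_2]_40} := <<gens>>%VS.

Lemma gen_mem i : (i < 8)%N -> gen i \in N40.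
Proof.
move=> lt_i8; apply: memv_span.
by rewrite -[i]/(nat_of_ord (Ordinal lt_i8)) -(tnth_mktuple (fun i => gen i)) mem_tnth.
Qed.

Lemma gen_entry i (k : 'I_40) : gen i 0 k = (gbit i k)%:R.
Proof. by rewrite mxE. Qed.

Lemma gens_self_orthogonal : {in gens &, forall u w, dot2 u w = 0}.
Proof.
have gbit_orth : all (fun i => all (fun j =>
    ~~ odd (count (fun k => gbit i k && gbit j k) (iota 0 40))) (iota 0 8)) (iota 0 8).
  by vm_compute.
move=> _ _ /tnthP[i ->] /tnthP[j ->]; rewrite !tnth_mktuple dot2_brow F2_natr.
have := all_iotaP (all_iotaP gbit_orth (ltn_ord i)) (ltn_ord j).
by move/negbTE ->.
Qed.

Lemma gens_doubly_even : {in gens, forall u, 4 %| hwt u}%N.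
Proof.
have gbit_dvd4 : all (fun i => 4 %| count (gbit i) (iota 0 40))%N (iota 0 8).
  by vm_compute.
move=> _ /tnthP[i ->]; rewrite tnth_mktuple hwt_brow.
exact: all_iotaP gbit_dvd4 _ (ltn_ord i).
Qed.

Lemma N40_doubly_even : doubly_even N40.
Proof. exact: doubly_even_span gens_self_orthogonal gens_doubly_even. Qed.

(* Column [pivot i] has leading binary digit [i], so the rows are triangular. *)
Definition pivot (i : nat) : nat := nth 0 [:: 1; 2; 3; 4; 7; 10; 12; 20] i.

Lemma N40_dim : \dim N40 = 8%N.
Proof.
have pivotP : all (fun i => [&& pivot i < 40, gbit i (pivot i)
    & all (fun j => ~~ gbit j (pivot i)) (iota i.+1 (7 - i))])%N (iota 0 8).
  by vm_compute.
have pivotE (i : 'I_8) : [&& pivot i < 40, gbit i (pivot i)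
    & all (fun j => ~~ gbit j (pivot i)) (iota i.+1 (7 - i))]%N.
  exact: all_iotaP pivotP _ (ltn_ord i).
suff /eqP : free gens by rewrite size_tuple.
apply: (@free_triangular _ 8 40 (fun i => gen i) (fun i => inord (pivot i)))
  => [i|i j lt_ij].
  have /and3P[lt_piv piv_i _] := pivotE i.
  by rewrite gen_entry inordK // piv_i oner_eq0.
have /and3P[lt_piv _ /allP piv_below] := pivotE i.
rewrite gen_entry inordK // (negbTE (piv_below j _)) // mem_iota lt_ij /=.
by rewrite ?addSn subnKC // -ltnS.
Qed.

Lemma all_ones_N40 : all_ones 40 \in N40.
Proof.
have -> : all_ones 40 = gen 0 + gen 1 + gen 2 + gen 3.
  rewrite /gen !browD -(eq_brow (f := predT)); last by vm_compute.
  by apply/matrixP => i j; rewrite !mxE.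
by rewrite !memvD // gen_mem.
Qed.

Lemma N40_separates (a b : 'I_40) : a != b -> exists2 u, u \in N40 & u 0 a != u 0 b.
Proof.
have cols_distinct : all (fun a => all (fun b => (a == b) ||
    has (fun i => gbit i a != gbit i b) (iota 0 8)) (iota 0 40)) (iota 0 40).
  by vm_compute.
move=> ab; have := all_iotaP (all_iotaP cols_distinct (ltn_ord a)) (ltn_ord b).
case/orP => [/eqP/val_inj eq_ab | /hasP[i]]; first by rewrite eq_ab eqxx in ab.
rewrite mem_iota => /andP[_ lt_i8] gab.
exists (gen i); first exact: gen_mem.
by rewrite !gen_entry; apply: contra gab => /eqP/F2_boolr_inj ->.
Qed.

Lemma N40_dual_min_wt : dual_min_wt_ge N40 4.
Proof. exact: dual_min_wt_ge4 all_ones_N40 N40_separates. Qed.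

Definition ind4 : 'rV['F_2]_40 := brow 40 (fun k => k < 4)%N.

Lemma ind4_mem : ind4 \in N40.
Proof.
have -> : ind4 = gen 0 + gen 1 + gen 2 by rewrite /gen !browD; apply: eq_brow; vm_compute.
by rewrite !memvD // gen_mem.
Qed.

Lemma hwt_ind4 : hwt ind4 = 4%N.
Proof. by rewrite hwt_brow. Qed.

Lemma ind4_neq0 : ind4 != 0.
Proof. by apply/eqP => ind4_0; move: hwt_ind4; rewrite ind4_0 hwt0. Qed.

Fixpoint bitseqs (m : nat) : seq bitseq :=
  if m is m'.+1 then [seq b :: s | b <- [:: false; true], s <- bitseqs m'] else [:: [::]].

Lemma mem_bitseqs (s : bitseq) : s \in bitseqs (size s).
Proof. by elim: s => [|b s IHs] //; apply: (allpairs_f cons) => //; case: b. Qed.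

(* Every pattern in rows [3..7] is the sum of at most two columns ([p = 0] gives a
   single column, since column [0] vanishes there). *)
Lemma high_bits_cover : all (fun s => has (fun p => has (fun q =>
    all (fun j => gbit (j + 3) p (+) gbit (j + 3) q == nth false s j) (iota 0 5))
  (iota 0 40)) (iota 0 40)) (bitseqs 5).
Proof. by vm_compute. Qed.

Lemma high_syndrome (t : 'rV['F_2]_40) : exists p q : 'I_40,
  forall i, (3 <= i < 8)%N -> dot2 (gen i) (t + (delta_mx 0 p + delta_mx 0 q)) = 0.
Proof.
pose s := [seq dot2 (gen (j + 3)) t != 0 | j <- iota 0 5].
have /hasP[p] := allP high_bits_cover s (mem_bitseqs s).
rewrite mem_iota add0n => /andP[_ lt_p40] /hasP[q].
rewrite mem_iota add0n => /andP[_ lt_q40] /allP pq_s.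
exists (Ordinal lt_p40), (Ordinal lt_q40) => i /andP[le3i lt_i8].
have pq_i : gbit i p (+) gbit i q = (dot2 (gen i) t != 0).
  have i3_iota : (i - 3)%N \in iota 0 5 by rewrite mem_iota ltn_subLR.
  have /eqP := pq_s _ i3_iota.
  by rewrite subnK // (nth_map 0%N) ?size_iota ?nth_iota ?ltn_subLR // add0n subnK.
rewrite !dot2Dr !dot2_delta !gen_entry [dot2 _ t]F2_neq0E -pq_i /=.
by case: (gbit i p); case: (gbit i q); rewrite /= ?addr0 ?add0r ?F2_addxx.
Qed.

Lemma gen_low_unit i (j : 'I_3) : (i < 8)%N -> gen i 0 (inord j.+1) = (i == j)%:R.
Proof.
have units : all (fun i => all (fun j => gbit i j.+1 == (i == j)) (iota 0 3)) (iota 0 8).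
  by vm_compute.
move=> lt_i8; rewrite gen_entry inordK; last by rewrite ltnS (leq_trans (ltn_ord j)).
by have /all_iotaP/(_ _ (ltn_ord j))/eqP -> := all_iotaP units lt_i8.
Qed.

Lemma dual_of_high_orthogonal (y : 'rV['F_2]_40) :
  (forall i, (3 <= i < 8)%N -> dot2 (gen i) y = 0) ->
  exists2 x, in_dual2 N40 x & forall k : 'I_40, (4 <= k)%N -> x 0 k = y 0 k.
Proof.
move=> y_high.
exists (y + \sum_(j < 3) dot2 (gen j) y *: delta_mx 0 (inord j.+1)); last first.
  move=> k le4k; rewrite !mxE summxE big1 ?addr0 // => j _; rewrite !mxE.
  suff /negbTE-> : k != inord j.+1 by rewrite andbF mulr0.
  apply: contraTneq le4k => ->; rewrite inordK; last by rewrite ltnS (leq_trans (ltn_ord j)).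
  by rewrite ltnS -ltnNge.
apply: in_dual2_span => _ /tnthP[i ->]; rewrite tnth_mktuple dot2Dr dot2_sumr.
under eq_bigr => j _ do rewrite dot2Zr dot2_delta (gen_low_unit _ (ltn_ord i)).
have [lt_i3 | le3i] := ltnP i 3.
  rewrite (bigD1 (Ordinal lt_i3)) //= eqxx mulr1 big1 ?addr0 ?F2_addxx // => j.
  by rewrite -val_eqE /= eq_sym => /negbTE->; rewrite mulr0.
rewrite big1 ?addr0 ?y_high ?le3i ?ltn_ord // => j _.
by rewrite gtn_eqF ?mulr0 // (leq_trans (ltn_ord j)).
Qed.

Lemma N40_cover_outside_ind4 (t : 'rV['F_2]_40) : exists x (p q : 'I_40),
  in_dual2 N40 x /\
  forall k, ind4 0 k = 0 -> x 0 k = t 0 k + (delta_mx 0 p + delta_mx 0 q : 'rV_40) 0 k.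
Proof.
have [p [q high]] := high_syndrome t.
have [x N'x x_eq] := dual_of_high_orthogonal high.
exists x, p, q; split=> // k; rewrite mxE => /(@F2_boolr_inj _ false)/negbT.
by rewrite -leqNgt => le4k; rewrite x_eq // mxE.
Qed.

Theorem mainTheorem13 :
  exists N : {vspace 'rV['F_2]_40},
    [/\ \dim N = 8%N, doubly_even N, all_ones 40 \in N, dual_min_wt_ge N 4
      & forall C : {set 'rV['Z_4]_40},
          typeII C -> residue_is C N -> ~ extremal C].
Proof.
exists N40; split=> [||||C C_II C_N [_ C_min]].
- exact: N40_dim.
- exact: N40_doubly_even.
- exact: all_ones_N40.
- exact: N40_dual_min_wt.
have [c Cc [c_neq0 c_light]] :=
  typeII_light_word C_II C_N ind4_mem ind4_neq0 N40_cover_outside_ind4.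
by have := leq_trans (C_min c Cc c_neq0) c_light; rewrite hwt_ind4.
Qed.
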